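(* Let $P,Q$ be nonzero coprime integers with $\Delta:=P^2-4Q\neq0$, such that $\alpha/\beta$ is not a root of unity, where $\alpha,\beta$ are the roots of $x^2-Px+Q$. Let $(U_n)$ be the Lucas sequence $U_n=(\alpha^n-\beta^n)/(\alpha-\beta)$. Then for every positive integer $n$, \[\mathrm{lcm}(U_1,U_2,\dots,U_n)=\mathrm{lcm}\left(U_n,U_{n-1},\dots,U_{n-\lceil n/2\rceil+1}\right).\]
   Context: $U_0=0$, $U_1=1$, $U_{n+2}=PU_{n+1}-QU_n$. *)

From mathcomp Require Import all_boot all_order all_algebra all_field.
Set Implicit Arguments. Unset Strict Implicit. Unset Printing Implicit Defensive.
Import Order.TTheory GRing.Theory Num.Theory.
Local Open Scope ring_scope.

Fixpoint lucas_pair (P Q : int) (n : nat) : int * int :=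
  match n with
  | 0%N => (0, 1)
  | m.+1 => let: (a, b) := lucas_pair P Q m in (b, P * b - Q * a)
  end.

Definition lucasU (P Q : int) (n : nat) : int := (lucas_pair P Q n).1.

Definition lcmU (P Q : int) (a b : nat) : nat :=
  \big[lcmn/1%N]_(a <= i < b) `|lucasU P Q i|%N.

From mathcomp Require Import all_boot all_order all_algebra all_field.
From mathcomp Require Import zify ring.
Import Order.TTheory GRing.Theory Num.Theory.
Local Open Scope ring_scope.

(* Only the divisibility property U_m | U_(km) of the Lucas sequence is
   needed: every 1 <= i <= n/2 has a multiple (n %/ i) * i in the window
   (n/2, n], so U_i divides U_((n %/ i) * i), which already occurs in the
   lcm of the window. *)

Section LucasSequence.

Variables P Q : int.

Local Notation U := (lucasU P Q).

Lemma lucasU0 : U 0 = 0. Proof. by []. Qed.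

Lemma lucasU1 : U 1 = 1. Proof. by []. Qed.

Lemma lucasUSS n : U n.+2 = P * U n.+1 - Q * U n.
Proof. by rewrite /lucasU /=; case: (lucas_pair P Q n). Qed.

Lemma lucasUD m n : U (m + n).+1 = U m.+1 * U n.+1 - Q * U m * U n.
Proof.
elim: m n => [|m IHm] n; first by rewrite add0n lucasU0 lucasU1; ring.
by rewrite addSnnS IHm !lucasUSS; ring.
Qed.

Lemma dvdz_lucasU_mull m k : (U m %| U (k * m))%Z.
Proof.
case: m => [|m]; first by rewrite muln0.
elim: k => [|k IHk]; first by rewrite lucasU0 dvdz0.
rewrite mulSn addSn lucasUD.
by apply: rpredB; [apply/dvdz_mulr/dvdzz | apply/dvdz_mull].
Qed.

Lemma dvdn_lucasU_mull m k : (`|U m| %| `|U (k * m)|)%N.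
Proof. by rewrite -dvdzE dvdz_lucasU_mull. Qed.

End LucasSequence.

Lemma dvdn_biglcm_nat a b (F : nat -> nat) m :
  (forall i, (a <= i < b)%N -> F i %| m)%N ->
  (\big[lcmn/1%N]_(a <= i < b) F i %| m)%N.
Proof.
move=> Fm; rewrite big_seq; elim/big_ind: _ => // [x y xm ym|i].
  by rewrite dvdn_lcm xm ym.
by rewrite mem_index_iota => /Fm.
Qed.

Lemma dvdn_biglcm_nat_sup a b (F : nat -> nat) j :
  (a <= j < b)%N -> (F j %| \big[lcmn/1%N]_(a <= i < b) F i)%N.
Proof.
by move=> jab; rewrite (bigD1_seq j) ?mem_index_iota ?iota_uniq //= dvdn_lcml.
Qed.

Lemma half_lt_divn_mul n i : (0 < i <= n)%N -> (n./2 < n %/ i * i)%N.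
Proof.
case/andP=> i_gt0 le_in.
have q_gt0 : (0 < n %/ i)%N by rewrite divn_gt0.
have r_lt_i : (n %% i < i)%N by rewrite ltn_mod.
have := divn_eq n i; have := odd_double_half n; nia.
Qed.

Lemma biglcm_divisibility_window (F : nat -> nat) n :
  (forall m k, F m %| F (k * m))%N ->
  \big[lcmn/1%N]_(1 <= i < n.+1) F i = \big[lcmn/1%N]_(n./2.+1 <= i < n.+1) F i.
Proof.
move=> F_dvd; have half_le : (n./2 <= n)%N by rewrite leq_half_double; lia.
rewrite (@big_cat_nat _ _ _ n./2.+1) //=.
apply/lcmn_idPr/dvdn_biglcm_nat => i /andP[i_gt0 le_i_half].
apply: dvdn_trans (F_dvd i (n %/ i)%N) _; apply: dvdn_biglcm_nat_sup.
by rewrite half_lt_divn_mul ?ltnS ?leq_divM // i_gt0 (leq_trans _ half_le) // -ltnS.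
Qed.

Theorem corollary5 (P Q : int) (alpha beta : algC) :
  P != 0 -> Q != 0 -> coprimez P Q ->
  P ^+ 2 - 4 * Q != 0 ->
  (* alpha, beta are the roots of x^2 - P x + Q *)
  alpha + beta = P%:~R -> alpha * beta = Q%:~R ->
  (* alpha / beta is not a root of unity *)
  (forall k : nat, (0 < k)%N -> (alpha / beta) ^+ k != 1) ->
  forall n : nat, (0 < n)%N ->
    lcmU P Q 1 n.+1 = lcmU P Q (n - uphalf n).+1 n.+1.
Proof.
move=> _ _ _ _ _ _ _ n _.
have -> : (n - uphalf n = n./2)%N by rewrite uphalf_half; have := odd_double_half n; lia.
exact/biglcm_divisibility_window/dvdn_lucasU_mull.
Qed.
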